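(* Let $k\geq 2$ be an integer and let $G=(V,E)$ be a graph on $n$ vertices. Let $\sim$ be a symmetric binary relation on $V$ such that for every $u\in V$ and $v\in V$, $v$ has at most $s$ neighbours $w$ with $u\sim w$. Then the number of homomorphic $2k$-cycles $(x_1,\dots,x_{2k})$ in $G$ such that $x_i\sim x_j$ for some $i\neq j$ is at most $$32k^{3/2}s^{1/2}\Delta(G)^{1/2}n^{\frac{1}{2k}}\hom(C_{2k},G)^{1-\frac{1}{2k}}.$$
   Context: A homomorphic $2k$-cycle in $G$ is a tuple $(x_1,\dots,x_{2k})\in V^{2k}$ with $x_ix_{i+1}\in E$ for all $1\leq i\leq 2k$, where $x_{2k+1}:=x_1$. $\hom(H,G)$ denotes the number of graph homomorphisms from $H$ to $G$. $\Delta(G)$ is the maximum degree. *)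

From mathcomp Require Import all_boot all_order all_algebra.
From mathcomp Require Import all_classical all_reals all_analysis.
Set Implicit Arguments. Unset Strict Implicit. Unset Printing Implicit Defensive.
Import Order.TTheory GRing.Theory Num.Theory.

Definition simple_graph (V : finType) (e : rel V) : Prop :=
  symmetric e /\ irreflexive e.

Definition cycle_rel (m : nat) : rel 'I_m :=
  fun i j => (j == ordS i) || (i == ordS j).

Definition hom_count (VH : finType) (eH : rel VH) (VG : finType) (eG : rel VG) : nat :=
  #|[set f : {ffun VH -> VG} | [forall x, forall y, eH x y ==> eG (f x) (f y)]]|.

Definition hom_cycle (V : finType) (e : rel V) (m : nat) (x : {ffun 'I_m -> V}) : bool :=
  [forall i, e (x i) (x (ordS i))].

Definition max_deg (V : finType) (e : rel V) : nat :=
  \max_(v : V) #|[set w | e v w]|.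

From mathcomp Require Import all_boot all_order all_algebra.
From mathcomp Require Import all_classical all_reals all_analysis.
From mathcomp Require Import zify ring lra.
Set Implicit Arguments. Unset Strict Implicit. Unset Printing Implicit Defensive.

(* Write k = K+1, N = 2k, W_m(a,b) for the number of walks of length m from
   a to b and h_m = \sum_(a,b) W_m(a,b)^2 for the number of closed walks of
   length 2m; thus h_0 = n and h_k <= hom(C_N, G).
   1. By Cauchy-Schwarz h_(m+1)^2 <= h_m h_(m+2), and chaining these
      log-convexity inequalities gives h_K^k <= n h_k^K.
   2. Cut a bad cycle x (one with x_i ~ x_j, i <> j) at j and read it in the
      direction for which x_i lies in the second half: x becomes a pair (p,q)
      of walks of length k glued at both ends, where the end of q is related
      to one of the first k vertices of q.  There are N cut points and two
      directions, so B <= 2N Z, with Z the number of such "glued pairs".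
   3. Splitting q at its last edge w -> v, Z = \sum_(v,z,w) [wv in E] W_k(v,z)
      R(z,w,v), where R counts walks of length K from z to w visiting a
      vertex related to v.  Cauchy-Schwarz, together with the degree bound
      and the bound s on related neighbours, gives Z^2 <= (D h_k)(k s h_K),
      where D is the maximum degree.
   4. Hence B^N <= (16 k^3 s D)^k n h_k^(N-1); taking N-th roots in a real
      field yields the stated bound. *)

Lemma cauchy_schwarz_nat (I : finType) (f g : I -> nat) :
  (\sum_i f i * g i) ^ 2 <= (\sum_i f i ^ 2) * (\sum_i g i ^ 2).
Proof.
rewrite -(leq_pmul2l (isT : 0 < 2)).
have -> : (\sum_i f i * g i) ^ 2 = \sum_i \sum_j (f i * g j) * (f j * g i).
  rewrite expnS expn1 big_distrl /=; apply: eq_bigr => i _.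
  rewrite big_distrr /=; apply: eq_bigr => j _; ring.
have -> : (\sum_i f i ^ 2) * (\sum_i g i ^ 2) = \sum_i \sum_j (f i * g j) ^ 2.
  rewrite big_distrl /=; apply: eq_bigr => i _.
  rewrite big_distrr /=; apply: eq_bigr => j _; ring.
(* symmetrize the right-hand side and compare termwise by AM-GM *)
have -> : 2 * (\sum_i \sum_j (f i * g j) ^ 2) =
          \sum_i \sum_j ((f i * g j) ^ 2 + (f j * g i) ^ 2).
  rewrite mul2n -addnn {2}exchange_big /= -big_split /=.
  by apply: eq_bigr => i _; rewrite -big_split.
rewrite big_distrr /=; apply: leq_sum => i _; rewrite big_distrr /=.
apply: leq_sum => j _; have := (nat_AGM2 (f i * g j) (f j * g i)).1.
rewrite sqrnD; lia.
Qed.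

Lemma sum_indicator (I : finType) (P : pred I) :
  \sum_i (P i : nat) = #|[set i | P i]|.
Proof. by rewrite -sum1dep_card [RHS]big_mkcond; apply: eq_bigr => i _; case: (P i). Qed.

Lemma sum_eq_indicator (I : finType) (a : I) (F : I -> nat) :
  \sum_v (a == v) * F v = F a.
Proof.
rewrite (bigD1 a) //= eqxx mul1n big1 ?addn0 // => v /negbTE.
by rewrite eq_sym => ->.
Qed.

Lemma sum_by_labels (I T : finType) (f1 f2 : I -> T) (G : I -> nat) :
  \sum_i G i = \sum_v \sum_z \sum_i ((f1 i == v) && (f2 i == z)) * G i.
Proof.
under [RHS]eq_bigr do rewrite exchange_big.
rewrite exchange_big /=; apply: eq_bigr => i _.
have -> : \sum_v \sum_z ((f1 i == v) && (f2 i == z)) * G i =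
          \sum_v (f1 i == v) * (\sum_z (f2 i == z) * G i).
  apply: eq_bigr => v _; rewrite big_distrr /=; apply: eq_bigr => z _.
  by case: (f1 i == v); case: (f2 i == z); rewrite ?mul0n ?mul1n ?muln0.
by rewrite !sum_eq_indicator.
Qed.

Lemma sum_triple (T : finType) (F : T -> T -> T -> nat) :
  \sum_(t : (T * T) * T) F t.1.1 t.1.2 t.2 = \sum_v \sum_z \sum_w F v z w.
Proof.
rewrite -(pair_bigA _ (fun p w => F p.1 p.2 w)) /=.
by rewrite -(pair_bigA _ (fun v z => \sum_w F v z w)).
Qed.

Lemma exists_le_count (I : finType) (P : pred I) (b : bool) :
  (b && [exists t, P t] : nat) <= \sum_t (b && P t : nat).
Proof.
case: b => //=; case: existsP => [[t Pt]|_] //.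
by rewrite (bigD1 t) //= Pt.
Qed.

Section Walks.
Variables (V : finType) (E : rel V).
Hypothesis Esym : symmetric E.

Fixpoint walks (m : nat) (a b : V) : nat :=
  if m is m'.+1 then \sum_w walks m' a w * E w b else (a == b).

Lemma walksD m n a b : walks (m + n) a b = \sum_c walks m a c * walks n c b.
Proof.
elim: n b => [|n IH] b /=.
  rewrite addn0 (bigD1 b) //= eqxx muln1 big1 ?addn0 // => c /negbTE.
  by rewrite eq_sym => ->; rewrite muln0.
rewrite addnS /=.
under eq_bigr => w _ do rewrite IH big_distrl /=.
rewrite exchange_big /=; apply: eq_bigr => c _.
by rewrite big_distrr /=; apply: eq_bigr => w _; rewrite mulnA.
Qed.

Lemma walks1 a b : walks 1 a b = E a b.
Proof. exact: sum_eq_indicator. Qed.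

Lemma walks_sym m a b : walks m a b = walks m b a.
Proof.
elim: m a b => [|m IH] a b; first by rewrite /= eq_sym.
have -> : walks m.+1 a b = \sum_c E a c * walks m c b.
  by rewrite -add1n walksD; under eq_bigr do rewrite walks1.
by rewrite [RHS]/=; apply: eq_bigr => c _; rewrite IH Esym mulnC.
Qed.

Definition closed_walks m := \sum_a \sum_b walks m a b ^ 2.

Lemma closed_walks0 : closed_walks 0 = #|V|.
Proof.
rewrite /closed_walks -sum1_card; apply: eq_bigr => a _.
have -> : \sum_b walks 0 a b ^ 2 = \sum_b (a == b) * 1.
  by apply: eq_bigr => b _; rewrite /=; case: (a == b).
by rewrite sum_eq_indicator.
Qed.

(* Moving one edge from one side of the square to the other:
   h_(m+1) = \sum_(a,b) W_m(a,b) W_(m+2)(a,b). *)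
Lemma closed_walks_shift m :
  closed_walks m.+1 = \sum_a \sum_b walks m a b * walks m.+2 a b.
Proof.
apply: eq_bigr => a _.
have -> : \sum_b walks m.+1 a b ^ 2 =
          \sum_b \sum_w walks m a w * E w b * walks m.+1 a b.
  by apply: eq_bigr => b _; rewrite -big_distrl expnS expn1.
rewrite exchange_big /=; apply: eq_bigr => w _.
rewrite /= big_distrr /=; apply: eq_bigr => b _.
by rewrite Esym; ring.
Qed.

Lemma closed_walks_log_convex m :
  closed_walks m.+1 ^ 2 <= closed_walks m * closed_walks m.+2.
Proof.
rewrite closed_walks_shift /closed_walks !pair_bigA /=.
exact: (cauchy_schwarz_nat (fun p : V * V => walks m p.1 p.2)).
Qed.

Lemma closed_walks_chain a :
  closed_walks a ^ a.+1 <= closed_walks 0 * closed_walks a.+1 ^ a.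
Proof.
elim: a => [|a IH]; first by rewrite expn0 expn1 muln1.
have hlc := closed_walks_log_convex a.
case: (posnP (closed_walks a.+1)) => [->|hpos]; first by rewrite exp0n.
rewrite -(@leq_pmul2l (closed_walks a.+1 ^ a)) ?expn_gt0 ?hpos //.
rewrite -expnD addnS -addSn addnn -mul2n expnM.
apply: (@leq_trans ((closed_walks a * closed_walks a.+2) ^ a.+1)).
  by rewrite leq_exp2r.
by rewrite expnMn mulnA [_ * closed_walks 0]mulnC leq_mul2r IH orbT.
Qed.

Definition is_walk m (p : {ffun 'I_m.+1 -> V}) : bool :=
  all (fun i => E (p (inord i)) (p (inord i.+1))) (iota 0 m).

Definition ffun_rcons m (g : {ffun 'I_m.+1 -> V}) (c : V) : {ffun 'I_m.+2 -> V} :=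
  [ffun i : 'I_m.+2 => if (i : nat) <= m then g (inord i) else c].

Lemma ffun_rcons_init m g c i : i <= m -> @ffun_rcons m g c (inord i) = g (inord i).
Proof. by move=> im; rewrite ffunE inordK ?im //; lia. Qed.

Lemma ffun_rcons_last m g c : @ffun_rcons m g c (inord m.+1) = c.
Proof. by rewrite ffunE inordK // ltnn. Qed.

Lemma ffun_rcons_bij m :
  bijective (fun gc : {ffun 'I_m.+1 -> V} * V => ffun_rcons gc.1 gc.2).
Proof.
exists (fun p : {ffun 'I_m.+2 -> V} =>
          ([ffun i : 'I_m.+1 => p (inord i)], p (inord m.+1))).
  move=> [g c] /=; rewrite ffun_rcons_last; congr (_, _).
  by apply/ffunP => i; rewrite ffunE ffun_rcons_init ?inord_val // -ltnS.
move=> p; apply/ffunP => i; rewrite ffunE.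
case: ifP => him; first by rewrite ffunE inordK ?inord_val //; lia.
congr (p _); apply/val_inj; rewrite /= inordK //; have := ltn_ord i; lia.
Qed.

Lemma is_walk_rcons m g c :
  is_walk (@ffun_rcons m g c) = is_walk g && E (g (inord m)) c.
Proof.
rewrite /is_walk.
have -> : iota 0 m.+1 = iota 0 m ++ [:: m] by rewrite -addn1 iotaD.
rewrite all_cat /= andbT.
rewrite ffun_rcons_init // ffun_rcons_last; congr (_ && _).
apply: eq_in_all => i; rewrite mem_iota => /andP[_ hi].
by rewrite !ffun_rcons_init //; lia.
Qed.

Lemma sum_ffun_rcons m (F : {ffun 'I_m.+2 -> V} -> nat) :
  \sum_p F p = \sum_g \sum_c F (@ffun_rcons m g c).
Proof.
rewrite (reindex (fun gc : {ffun 'I_m.+1 -> V} * V => ffun_rcons gc.1 gc.2)) /=.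
  by rewrite -(pair_bigA _ (fun g c => F (ffun_rcons g c))).
exact/onW_bij/ffun_rcons_bij.
Qed.

Lemma sum_ffun1 (F : {ffun 'I_1 -> V} -> nat) : \sum_p F p = \sum_c F [ffun=> c].
Proof.
rewrite (reindex (fun c : V => [ffun=> c])) //.
apply: onW_bij; exists (fun p : {ffun 'I_1 -> V} => p ord0) => [c|p].
  by rewrite ffunE.
by apply/ffunP => i; rewrite !ffunE (ord1 i).
Qed.

Lemma count_walk_tuples m a b :
  \sum_(p : {ffun 'I_m.+1 -> V})
     (is_walk p && (p (inord 0) == a) && (p (inord m) == b)) = walks m a b.
Proof.
elim: m a b => [|m IH] a b.
  rewrite sum_ffun1 /= (bigD1 a) //= !ffunE eqxx big1 ?addn0 //.
  by move=> c /negbTE; rewrite !ffunE => ->.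
rewrite sum_ffun_rcons /=.
have -> : \sum_(g : {ffun 'I_m.+1 -> V}) \sum_c
   (is_walk (ffun_rcons g c) && (ffun_rcons g c (inord 0) == a)
      && (ffun_rcons g c (inord m.+1) == b) : nat)
  = \sum_(g : {ffun 'I_m.+1 -> V}) (is_walk g && (g (inord 0) == a)) * E (g (inord m)) b.
  apply: eq_bigr => g _; rewrite (bigD1 b) //= ffun_rcons_last eqxx.
  rewrite is_walk_rcons ffun_rcons_init // big1 ?addn0; last first.
    by move=> c /negbTE; rewrite ffun_rcons_last => ->; rewrite andbF.
  by case: (is_walk g); case: (g (inord 0) == a); case: (E _ b).
rewrite (partition_big (fun g : {ffun 'I_m.+1 -> V} => g (inord m)) xpredT) //=.
apply: eq_bigr => w _; rewrite -IH big_distrl /= big_mkcond /=.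
by apply: eq_bigr => g _; case: eqP => [->|]; rewrite ?andbT ?andbF.
Qed.

Section GluedPairs.
Variables (sim : rel V) (K : nat).

Definition end_related (q : {ffun 'I_K.+2 -> V}) :=
  [exists t : 'I_K.+1, sim (q (inord t)) (q (inord K.+1))].

Definition glued_pairs := \sum_(pq : {ffun 'I_K.+2 -> V} * {ffun 'I_K.+2 -> V})
  [&& is_walk pq.1, is_walk pq.2, pq.1 (inord K.+1) == pq.2 (inord 0),
      pq.2 (inord K.+1) == pq.1 (inord 0) & end_related pq.2].

Local Notation N := (2 * K.+1).

Lemma cycle_len_gt0 : 0 < N. Proof. by rewrite muln_gt0. Qed.

Definition cyc (i : nat) : 'I_N := Ordinal (ltn_pmod i cycle_len_gt0).

Lemma cyc_val (i : 'I_N) : cyc i = i.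
Proof. by apply/val_inj; rewrite /= modn_small. Qed.

Lemma cyc_small i : i < N -> (cyc i : nat) = i.
Proof. by move=> h; rewrite /= modn_small. Qed.

Lemma cycS i : cyc i.+1 = ordS (cyc i).
Proof. by apply/val_inj; rewrite /= -addn1 -modnDml addn1. Qed.

Lemma cycN i : cyc (i + N) = cyc i.
Proof. by apply/val_inj; rewrite /= modnDr. Qed.

Lemma hom_cycle_adj x : hom_cycle E x -> forall i, E (x (cyc i)) (x (cyc i.+1)).
Proof. by move=> /forallP h i; rewrite cycS. Qed.

(* The position t steps away from j, forwards if d and backwards otherwise;
   the representative j + N - t avoids truncated subtraction for t <= N. *)
Definition step (d : bool) (j t : nat) := if d then j + t else j + N - t.

Lemma hom_cycle_step_adj x d j t : hom_cycle E x -> t < N ->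
  E (x (cyc (step d j t))) (x (cyc (step d j t.+1))).
Proof.
move=> hx ht; case: d; rewrite /step; first by rewrite addnS; exact: hom_cycle_adj.
have -> : j + N - t = (j + N - t.+1).+1 by lia.
by rewrite Esym; exact: hom_cycle_adj.
Qed.

Lemma step0 d (j : 'I_N) : cyc (step d j 0) = j.
Proof. by rewrite /step; case: d; rewrite ?addn0 ?subn0 ?cycN cyc_val. Qed.

Lemma step_round d (j : 'I_N) : cyc (step d j (K.+1 + K.+1)) = j.
Proof.
rewrite (_ : K.+1 + K.+1 = N) /step; last by lia.
by case: d; rewrite ?cycN ?addnK cyc_val.
Qed.

Lemma step_surj_fwd (j i : 'I_N) : exists2 t, t <= N & cyc (step true j t) = i.
Proof.
rewrite /step; have hi := ltn_ord i; have hj := ltn_ord j.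
case: (leqP (j : nat) i) => hji.
  by exists (i - j); [lia | apply/val_inj => /=; rewrite modn_small; lia].
exists (i + N - j); first lia.
by rewrite (_ : j + (i + N - j) = i + N) ?cycN ?cyc_val //; lia.
Qed.

Lemma step_surj d (j i : 'I_N) : exists2 t, t <= N & cyc (step d j t) = i.
Proof.
case: d; first exact: step_surj_fwd.
have [t ht <-] := step_surj_fwd j i.
by exists (N - t); [lia | rewrite /step; congr cyc; lia].
Qed.

Definition first_half d j (x : {ffun 'I_N -> V}) : {ffun 'I_K.+2 -> V} :=
  [ffun t : 'I_K.+2 => x (cyc (step d j t))].
Definition second_half d j (x : {ffun 'I_N -> V}) : {ffun 'I_K.+2 -> V} :=
  [ffun t : 'I_K.+2 => x (cyc (step d j (K.+1 + t)))].

Lemma first_halfE d j x t :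
  t <= K.+1 -> first_half d j x (inord t) = x (cyc (step d j t)).
Proof. by move=> h; rewrite ffunE inordK. Qed.

Lemma second_halfE d j x t :
  t <= K.+1 -> second_half d j x (inord t) = x (cyc (step d j (K.+1 + t))).
Proof. by move=> h; rewrite ffunE inordK. Qed.

Lemma is_walk_first_half d j x : hom_cycle E x -> is_walk (first_half d j x).
Proof.
move=> hx; apply/allP => i; rewrite mem_iota => /andP[_ hi].
by rewrite !first_halfE; try apply: hom_cycle_step_adj; lia.
Qed.

Lemma is_walk_second_half d j x : hom_cycle E x -> is_walk (second_half d j x).
Proof.
move=> hx; apply/allP => i; rewrite mem_iota => /andP[_ hi].
by rewrite !second_halfE ?addnS; try apply: hom_cycle_step_adj; lia.
Qed.

Lemma halves_glued d (j : 'I_N) x :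
  (first_half d j x (inord K.+1) == second_half d j x (inord 0)) &&
  (second_half d j x (inord K.+1) == first_half d j x (inord 0)).
Proof.
by rewrite !first_halfE // !second_halfE // addn0 step_round step0 !eqxx.
Qed.

Lemma halves_inj d (j : 'I_N) x y :
  first_half d j x = first_half d j y -> second_half d j x = second_half d j y ->
  x = y.
Proof.
move=> hP hQ; apply/ffunP => i; have [t ht <-] := step_surj d j i.
case: (leqP t K.+1) => htk; first by rewrite -!first_halfE // hP.
rewrite (_ : t = K.+1 + (t - K.+1)); last by lia.
by rewrite -!second_halfE ?hQ //; lia.
Qed.

(* If x_i ~ x_j with i <> j, then cutting at j in the direction that puts
   x_i among the first K+1 vertices of the second half makes it
   end-related: the second half ends at x_j. *)
Lemma bad_cycle_cut x : hom_cycle E x ->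
  [exists i, exists j, (i != j) && sim (x i) (x j)] ->
  exists (j : 'I_N) (d : bool), end_related (second_half d j x).
Proof.
move=> hx /existsP[i /existsP[j /andP[hij hsim]]]; exists j.
have [t0 ht0 e0] := step_surj_fwd j i; rewrite /step in e0.
have t0N : t0 != N.
  by apply: contraNneq hij => h; apply/eqP; rewrite -e0 h cycN cyc_val.
have t00 : t0 != 0.
  by apply: contraNneq hij => h; apply/eqP; rewrite -e0 h addn0 cyc_val.
case: (leqP K.+1 t0) => hk.
  exists true; apply/existsP; exists (inord (t0 - K.+1)).
  rewrite second_halfE ?inordK; try lia.
  rewrite second_halfE // step_round /step.
  by rewrite (_ : j + (K.+1 + (t0 - K.+1)) = j + t0) ?e0 //; lia.
exists false; apply/existsP; exists (inord (K.+1 - t0)).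
rewrite second_halfE ?inordK; try lia.
rewrite second_halfE // step_round /step.
by rewrite (_ : j + N - (K.+1 + (K.+1 - t0)) = j + t0) ?e0 //; lia.
Qed.

Lemma cut_count_le (d : bool) (j : 'I_N) :
  #|[set x : {ffun 'I_N -> V} | hom_cycle E x && end_related (second_half d j x)]|
  <= glued_pairs.
Proof.
rewrite /glued_pairs sum_indicator.
rewrite -(@card_in_imset _ _ (fun x => (first_half d j x, second_half d j x))).
  apply: subset_leq_card; apply/fintype.subsetP => pq /imsetP [x].
  rewrite inE => /andP [hx hrel] ->.
  rewrite inE /= is_walk_first_half // is_walk_second_half // hrel andbT.
  by have := halves_glued d j x.
by move=> x y _ _ [] hP hQ; exact: halves_inj hP hQ.
Qed.

(* B <= 2N Z: every bad cycle is counted by one of the 2N cuts. *)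
Lemma bad_cycles_le : #|[set x : {ffun 'I_N -> V} | hom_cycle E x &&
        [exists i, exists j, (i != j) && sim (x i) (x j)]]| <= N * 2 * glued_pairs.
Proof.
rewrite -sum_indicator.
apply: (@leq_trans (\sum_(x : {ffun 'I_N -> V}) \sum_(j : 'I_N) \sum_(d : bool)
           (hom_cycle E x && end_related (second_half d j x) : nat))).
  apply: leq_sum => x _.
  case hx: (hom_cycle E x) => //=; case hb: [exists _, _] => //=.
  have [j [d hrel]] := bad_cycle_cut hx hb.
  by rewrite (bigD1 j) //= (bigD1 d) //= hrel -addnA leq_addr.
rewrite exchange_big /=.
apply: (@leq_trans (\sum_(j : 'I_N) \sum_(d : bool) glued_pairs)); last first.
  by rewrite !sum_nat_const !card_ord card_bool mulnA.
apply: leq_sum => j _; rewrite exchange_big /=; apply: leq_sum => d _.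
by rewrite sum_indicator cut_count_le.
Qed.

Definition glue (p q : {ffun 'I_K.+2 -> V}) : {ffun 'I_N -> V} :=
  [ffun i : 'I_N => if (i : nat) < K.+1 then p (inord i) else q (inord (i - K.+1))].

Lemma first_half_glue (p q : {ffun 'I_K.+2 -> V}) :
  p (inord K.+1) = q (inord 0) -> first_half true 0 (glue p q) = p.
Proof.
move=> hm; apply/ffunP => t; rewrite !ffunE /step add0n.
have ht := ltn_ord t; rewrite cyc_small; last lia.
case: ifP => h; first by rewrite inord_val.
rewrite (_ : t = inord K.+1); last by apply/val_inj; rewrite /= inordK //; lia.
by rewrite inordK // subnn hm.
Qed.

Lemma second_half_glue (p q : {ffun 'I_K.+2 -> V}) :
  q (inord K.+1) = p (inord 0) -> second_half true 0 (glue p q) = q.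
Proof.
move=> hm; apply/ffunP => t; rewrite !ffunE /step add0n.
have ht := ltn_ord t; case: (ltnP t K.+1) => htk.
  rewrite cyc_small ?ifN; try lia.
  by rewrite (_ : K.+1 + t - K.+1 = t) ?inord_val //; lia.
rewrite (_ : K.+1 + t = 0 + N) ?cycN; last by lia.
rewrite (_ : t = inord K.+1); last by apply/val_inj; rewrite /= inordK //; lia.
by rewrite (_ : (cyc 0 : nat) = 0) ?hm // /= mod0n.
Qed.

Lemma hom_cycle_of_halves x :
  is_walk (first_half true 0 x) -> is_walk (second_half true 0 x) -> hom_cycle E x.
Proof.
move=> /allP hP /allP hQ; apply/forallP => i; have hi := ltn_ord i.
case: (ltnP i K.+1) => hik.
  have := hP i; rewrite mem_iota /= => /(_ hik).
  by rewrite !first_halfE ?/step ?add0n ?cycS ?cyc_val //; lia.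
have := hQ (i - K.+1); rewrite mem_iota /= => /(_ ltac:(lia)).
rewrite !second_halfE ?/step ?add0n ?addnS; try lia.
by rewrite (_ : K.+1 + (i - K.+1) = i) ?cycS ?cyc_val //; lia.
Qed.

Definition related_walks z v := \sum_(q : {ffun 'I_K.+2 -> V})
  [&& is_walk q, q (inord 0) == z, q (inord K.+1) == v & end_related q].

Definition marked_walks z w v := \sum_(r : {ffun 'I_K.+1 -> V})
  [&& is_walk r, r (inord 0) == z, r (inord K) == w & [exists t, sim (r t) v]].

(* Z = \sum_(v,z) W_k(v,z) Q(z,v): classify glued pairs by the endpoints
   v, z of p and count each half separately. *)
Lemma glued_pairsE :
  glued_pairs = \sum_v \sum_z walks K.+1 v z * related_walks z v.
Proof.
rewrite /glued_pairs -(pair_bigA _ (fun p q =>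
  ([&& is_walk p, is_walk q, p (inord K.+1) == q (inord 0),
       q (inord K.+1) == p (inord 0) & end_related q] : nat))) /=.
have -> : \sum_(p : {ffun 'I_K.+2 -> V}) \sum_(q : {ffun 'I_K.+2 -> V})
   ([&& is_walk p, is_walk q, p (inord K.+1) == q (inord 0),
      q (inord K.+1) == p (inord 0) & end_related q] : nat)
   = \sum_(p : {ffun 'I_K.+2 -> V})
        is_walk p * related_walks (p (inord K.+1)) (p (inord 0)).
  apply: eq_bigr => p _; rewrite /related_walks big_distrr /=.
  apply: eq_bigr => q _; case: (is_walk p); rewrite ?mul0n ?mul1n //=.
  by rewrite [p _ == _]eq_sym [q _ == p _]eq_sym.
rewrite (sum_by_labels (fun p : {ffun 'I_K.+2 -> V} => p (inord 0))
                       (fun p => p (inord K.+1))).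
apply: eq_bigr => v _; apply: eq_bigr => z _.
change (\sum_w walks K v w * E w z) with (walks K.+1 v z).
rewrite -count_walk_tuples big_distrl /=; apply: eq_bigr => p _.
case: eqP => [->|_]; last by rewrite /= ?andbF.
case: eqP => [->|_]; last by rewrite /= ?andbF.
by rewrite !andbT mul1n.
Qed.

(* Split an end-related walk at its last edge w -> v. *)
Lemma related_walksE z v : related_walks z v = \sum_w E w v * marked_walks z w v.
Proof.
rewrite /related_walks sum_ffun_rcons /=.
have -> : \sum_(g : {ffun 'I_K.+1 -> V}) \sum_c
   ([&& is_walk (ffun_rcons g c), ffun_rcons g c (inord 0) == z,
        ffun_rcons g c (inord K.+1) == v & end_related (ffun_rcons g c)] : nat)
  = \sum_(g : {ffun 'I_K.+1 -> V})
      [&& is_walk g, g (inord 0) == z, E (g (inord K)) v & [exists t, sim (g t) v]].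
  apply: eq_bigr => g _.
  rewrite -(sum_eq_indicator v (fun c => [&& is_walk g, g (inord 0) == z,
    E (g (inord K)) c & [exists t, sim (g t) c]] : nat)).
  apply: eq_bigr => c _.
  rewrite is_walk_rcons ffun_rcons_last ffun_rcons_init // /end_related ffun_rcons_last.
  have -> : [exists t : 'I_K.+1, sim (ffun_rcons g c (inord t)) c] =
            [exists t, sim (g t) c].
    by apply: eq_existsb => t; rewrite ffun_rcons_init ?inord_val // -ltnS.
  rewrite [c == v]eq_sym; case: (v == c); rewrite ?andbF ?mul0n ?mul1n //=.
  by case: (is_walk g); case: (E _ c); case: (g _ == z).
rewrite (partition_big (fun g : {ffun 'I_K.+1 -> V} => g (inord K)) xpredT) //=.
apply: eq_bigr => w _; rewrite /marked_walks big_distrr /= big_mkcond /=.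
apply: eq_bigr => r _.
case: eqP => [->|_]; last by rewrite /= !andbF muln0.
by case: (E w v); rewrite /= ?andbT ?andbF ?mul1n ?mul0n.
Qed.

Lemma marked_walks_le z w v : marked_walks z w v <= walks K z w.
Proof.
rewrite -count_walk_tuples /marked_walks; apply: leq_sum => r _.
by case: (is_walk r); case: (_ == z); case: (_ == w); case: [exists _, _].
Qed.

Variables (Dm s : nat).
Hypothesis deg_le : forall v, #|[set w | E v w]| <= Dm.
Hypothesis related_nbrs_le : forall u v, #|[set w | E v w && sim u w]| <= s.

(* Each of the K+1 vertices of r has at most s related neighbours of w. *)
Lemma sum_marked_walks_le z w :
  \sum_v E w v * marked_walks z w v <= K.+1 * s * walks K z w.
Proof.
rewrite /marked_walks.
have -> : \sum_v E w v * (\sum_(r : {ffun 'I_K.+1 -> V})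
     ([&& is_walk r, r (inord 0) == z, r (inord K) == w & [exists t, sim (r t) v]] : nat))
  = \sum_(r : {ffun 'I_K.+1 -> V}) [&& is_walk r, r (inord 0) == z & r (inord K) == w] *
       \sum_v (E w v && [exists t, sim (r t) v] : nat).
  under eq_bigr do rewrite big_distrr.
  rewrite exchange_big /=; apply: eq_bigr => r _; rewrite big_distrr /=.
  apply: eq_bigr => v _.
  by case: (E w v); case: (is_walk r); case: (_ == z); case: (_ == w);
     case: [exists _, _].
rewrite [X in _ <= X]mulnC -count_walk_tuples big_distrl /=; apply: leq_sum => r _.
rewrite -andbA leq_mul2l; apply/orP; right.
apply: (@leq_trans (\sum_v \sum_t (E w v && sim (r t) v : nat))).
  by apply: leq_sum => v _; exact: (exists_le_count (fun t => sim (r t) v)).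
rewrite exchange_big /= -[X in _ <= X * _]card_ord -sum_nat_const.
by apply: leq_sum => t _; rewrite sum_indicator related_nbrs_le.
Qed.

(* Z^2 <= (D h_(K+1)) ((K+1) s h_K), by Cauchy-Schwarz over triples (v,z,w). *)
Lemma glued_pairs_sqr_le :
  glued_pairs ^ 2 <= (Dm * closed_walks K.+1) * (K.+1 * s * closed_walks K).
Proof.
have -> : glued_pairs = \sum_(t : (V * V) * V)
    (E t.2 t.1.1 * walks K.+1 t.1.1 t.1.2) * (E t.2 t.1.1 * marked_walks t.1.2 t.2 t.1.1).
  rewrite (sum_triple (fun v z w => (E w v * walks K.+1 v z) * (E w v * marked_walks z w v))).
  rewrite glued_pairsE; apply: eq_bigr => v _; apply: eq_bigr => z _.
  rewrite related_walksE big_distrr /=; apply: eq_bigr => w _.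
  by case: (E w v); rewrite ?mul0n ?muln0 ?mul1n.
apply: (leq_trans (cauchy_schwarz_nat _ _)); apply: leq_mul.
  rewrite (sum_triple (fun v z w => (E w v * walks K.+1 v z) ^ 2)).
  rewrite big_distrr /=; apply: leq_sum => v _.
  rewrite big_distrr /=; apply: leq_sum => z _.
  have -> : \sum_w (E w v * walks K.+1 v z) ^ 2 =
            walks K.+1 v z ^ 2 * \sum_w (E w v : nat).
    rewrite big_distrr /=; apply: eq_bigr => w _.
    by case: (E w v); rewrite ?mul0n ?muln0 ?mul1n ?muln1 ?exp0n.
  rewrite mulnC leq_mul2r (eq_bigr (fun w => (E v w : nat))) => [|w _]; last first.
    by rewrite Esym.
  by rewrite sum_indicator deg_le orbT.
rewrite (sum_triple (fun v z w => (E w v * marked_walks z w v) ^ 2)).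
rewrite big_distrr /= exchange_big /=; apply: leq_sum => z _.
rewrite big_distrr /= exchange_big /=; apply: leq_sum => w _.
apply: (@leq_trans (\sum_v walks K z w * (E w v * marked_walks z w v))).
  apply: leq_sum => v _; rewrite expnS expn1 leq_mul2r; apply/orP; right.
  by case: (E w v); rewrite ?mul0n ?mul1n ?marked_walks_le.
by rewrite -big_distrr /= mulnC expnS expn1 mulnA leq_mul2r sum_marked_walks_le orbT.
Qed.

End GluedPairs.

(* h_(K+1) <= hom(C_N, G)-many tuples: gluing is injective on glued pairs. *)
Lemma closed_walks_le_hom_cycles K :
  closed_walks K.+1 <= #|[set x : {ffun 'I_(2 * K.+1) -> V} | hom_cycle E x]|.
Proof.
have -> : closed_walks K.+1 = glued_pairs (fun _ _ => true) K.
  rewrite glued_pairsE; apply: eq_bigr => v _; apply: eq_bigr => z _.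
  rewrite expnS expn1; congr (_ * _); rewrite walks_sym -count_walk_tuples.
  apply: eq_bigr => q _; rewrite /end_related.
  have -> : [exists t : 'I_K.+1, true] by apply/existsP; exists ord0.
  by rewrite !andbA andbT.
rewrite /glued_pairs sum_indicator.
rewrite -(@card_in_imset _ _ (fun pq => glue pq.1 pq.2)).
  apply: subset_leq_card; apply/fintype.subsetP => x /imsetP [[p q]].
  rewrite inE /= => /and5P [hp hq h1 h2 _] ->.
  rewrite inE; apply: hom_cycle_of_halves.
    by rewrite (first_half_glue (eqP h1)).
  by rewrite (second_half_glue (eqP h2)).
move=> [p q] [p' q']; rewrite !inE /=.
move=> /and5P [_ _ h1 h2 _] /and5P [_ _ h1' h2' _] e.
have e1 := congr1 (first_half true 0) e; have e2 := congr1 (second_half true 0) e.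
rewrite /= (first_half_glue (eqP h1)) (first_half_glue (eqP h1')) in e1.
rewrite /= (second_half_glue (eqP h2)) (second_half_glue (eqP h2')) in e2.
by rewrite e1 e2.
Qed.

End Walks.

Lemma hom_cycles_le_hom_count (V : finType) (E : rel V) m : symmetric E ->
  #|[set x : {ffun 'I_m -> V} | hom_cycle E x]| <= hom_count (@cycle_rel m) E.
Proof.
move=> Esym; apply: subset_leq_card; apply/fintype.subsetP => f.
rewrite !inE => /forallP hf; apply/forallP => a; apply/forallP => b.
by apply/implyP; case/orP => /eqP ->; [exact: hf | rewrite Esym; exact: hf].
Qed.

Lemma pow_bound_of_counting (B Dm s n H h0 h1 Z K : nat) :
  B <= (2 * K.+1) * 2 * Z ->
  Z ^ 2 <= (Dm * h1) * (K.+1 * s * h0) ->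
  h0 ^ K.+1 <= n * h1 ^ K -> h1 <= H ->
  B ^ (2 * K.+1) <= (16 * K.+1 ^ 3 * s * Dm) ^ K.+1 * n * H ^ (2 * K.+1).-1.
Proof.
move=> hB hZ hchain hH; set C := 16 * K.+1 ^ 3 * s * Dm.
have hB2 : B ^ 2 <= C * (h1 * h0).
  apply: (@leq_trans ((2 * K.+1 * 2) ^ 2 * Z ^ 2)); first by rewrite -expnMn leq_exp2r.
  apply: (@leq_trans ((2 * K.+1 * 2) ^ 2 * ((Dm * h1) * (K.+1 * s * h0)))).
    by rewrite leq_mul2l hZ orbT.
  by rewrite /C leq_eqVlt; apply/orP; left; apply/eqP; ring.
apply: (@leq_trans (C ^ K.+1 * (h1 ^ K.+1 * h0 ^ K.+1))).
  by rewrite expnM -!expnMn leq_exp2r.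
apply: (@leq_trans (C ^ K.+1 * (h1 ^ K.+1 * (n * h1 ^ K)))).
  by rewrite leq_mul2l leq_mul2l hchain !orbT.
rewrite (_ : (2 * K.+1).-1 = K.+1 + K); last by lia.
rewrite (_ : C ^ K.+1 * (h1 ^ K.+1 * (n * h1 ^ K)) = C ^ K.+1 * n * h1 ^ (K.+1 + K)).
  by rewrite leq_mul2l leq_exp2r // hH orbT.
by rewrite expnD; ring.
Qed.

Lemma bad_cycles_pow_bound (V : finType) (E sim : rel V) (K Dm s : nat) :
  symmetric E -> (forall v, #|[set w | E v w]| <= Dm) ->
  (forall u v, #|[set w | E v w && sim u w]| <= s) ->
  #|[set x : {ffun 'I_(2 * K.+1) -> V} | hom_cycle E x &&
      [exists i, exists j, (i != j) && sim (x i) (x j)]]| ^ (2 * K.+1)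
  <= (16 * K.+1 ^ 3 * s * Dm) ^ K.+1 * #|V|
     * hom_count (@cycle_rel (2 * K.+1)) E ^ (2 * K.+1).-1.
Proof.
move=> Esym deg_le related_nbrs_le.
have hchain := closed_walks_chain Esym K; rewrite closed_walks0 in hchain.
apply: (pow_bound_of_counting (bad_cycles_le Esym sim K)
          (glued_pairs_sqr_le Esym K deg_le related_nbrs_le) hchain).
exact: leq_trans (closed_walks_le_hom_cycles Esym K) (hom_cycles_le_hom_count _ Esym).
Qed.

Import Order.TTheory GRing.Theory Num.Theory.
Local Open Scope ring_scope.

Lemma powR_exp (R : realType) (b x : R) (n : nat) : 0 <= b ->
  (powR b x) ^+ n = powR b (x * n%:R).
Proof. by move=> b0; rewrite -powR_mulrn ?powR_ge0 // -powRrM. Qed.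

Lemma root_of_pow_bound (R : realType) (k B D s' n H : nat) (s : R) :
  (0 < k)%N -> s'%:R <= s ->
  (B ^ (2 * k) <= (16 * k ^ 3 * s' * D) ^ k * n * H ^ (2 * k).-1)%N ->
  B%:R <= 32 * powR k%:R (3 / 2) * powR s (1 / 2) * powR D%:R (1 / 2)
          * powR n%:R (1 / (2 * k)%N%:R) * powR H%:R (1 - 1 / (2 * k)%N%:R).
Proof.
move=> k_gt0 s's hB; have s0 : 0 <= s := le_trans (ler0n _ _) s's.
set N := (2 * k)%N; have N_gt0 : (0 < N)%N by rewrite muln_gt0.
have ex1 : (3 / 2 : R) * N%:R = (3 * k)%N%:R by rewrite !natrM; lra.
have ex2 : (1 / 2 : R) * N%:R = k%:R by rewrite natrM; lra.
have ex3 : (1 / N%:R : R) * N%:R = 1 by rewrite mul1r mulVf // pnatr_eq0 -lt0n.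
have ex4 : (1 - 1 / N%:R : R) * N%:R = N.-1%:R.
  by rewrite mulrBl ex3 mul1r -{1}(prednK N_gt0) -natr1 addrK.
rewrite -(ler_pXn2r N_gt0) ?nnegrE ?ler0n ?mulr_ge0 ?powR_ge0 //.
rewrite !exprMn !powR_exp ?ler0n // ex1 ex2 ex3 ex4 !powR_mulrn ?ler0n // powRr1 ?ler0n //.
apply: (le_trans (_ : _ <= ((16 * k ^ 3 * s' * D) ^ k * n * H ^ N.-1)%N%:R)).
  by rewrite -natrX ler_nat.
rewrite !(natrM, natrX) !exprMn.
rewrite (_ : k%:R ^+ k * (k%:R ^+ k * k%:R ^+ k) = k%:R ^+ (3 * k) :> R); last first.
  by rewrite -!exprD; congr (_ ^+ _); lia.
do 3 (apply: ler_wpM2r; first by rewrite ?exprn_ge0 ?ler0n).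
apply: ler_pM; rewrite ?mulr_ge0 ?exprn_ge0 ?ler0n //; last by rewrite lerXn2r ?nnegrE ?ler0n.
apply: ler_wpM2r; first by rewrite exprn_ge0 ?ler0n.
have h16 : (16 ^ k <= 32 ^ N)%N.
  apply: (@leq_trans (32 ^ k)); first by rewrite leq_exp2r.
  by rewrite leq_pexp2l // leq_pmull.
by rewrite -(ler_nat R) !natrX in h16.
Qed.

Unset Implicit Arguments.

Theorem lemma2p2 (R : realType) (V : finType) (E : rel V) (sim : rel V)
  (k : nat) (s : R) :
  (2 <= k)%N ->
  simple_graph E ->
  symmetric sim ->
  (forall u v : V, (#|[set w | E v w && sim u w]|)%:R <= s) ->
  (#|[set x : {ffun 'I_(2 * k)%N -> V} | hom_cycle E x &&
        [exists i, exists j, (i != j) && sim (x i) (x j)]]|)%:R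
  <= 32 * powR (k%:R) (3 / 2) * powR s (1 / 2) * powR ((max_deg E)%:R) (1 / 2)
     * powR (#|V|%:R) (1 / (2 * k)%N%:R)
     * powR ((hom_count (@cycle_rel (2 * k)%N) E)%:R) (1 - 1 / (2 * k)%N%:R).
Proof.
move=> k_ge2 [Esym _] _ related_nbrs_le; case: k k_ge2 => [//|K] _.
set bad := [set x : {ffun 'I_(2 * K.+1)%N -> V} | _].
have [->|bad_gt0] := posnP #|bad|; first by rewrite ?mulr_ge0 ?powR_ge0.
(* a bad cycle exhibits a vertex, so s' below is attained and s' <= s *)
have [x _] := card_gt0P bad_gt0.
have VV_gt0 : (0 < #|{: V * V}|)%N.
  by apply/card_gt0P; exists (x (Ordinal (cycle_len_gt0 K)), x (Ordinal (cycle_len_gt0 K))).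
pose nbrs p := #|[set w | E p.2 w && sim p.1 w]|.
have [[u v] s'E] := bigop.eq_bigmax nbrs VV_gt0.
apply: (@root_of_pow_bound _ _ _ _ (\max_p nbrs p)); first by [].
  by rewrite s'E; exact: related_nbrs_le.
apply: bad_cycles_pow_bound => // [w | u' v'].
  exact: (@leq_bigmax _ (fun v => #|[set w | E v w]|) w).
exact: (@leq_bigmax _ nbrs (u', v')).
Qed.
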